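(* Let $\phi_1,\phi_2,\phi_3\in\mathbb{R}$ satisfy $\phi_i-\phi_j\neq 2n\pi$ for all $i\neq j$ and all integers $n$, and fix $0<R<1$. For $A>0$ and $(b_1,b_2)\in\mathbb{R}^2$ with $b_1^2+b_2^2\le R$, define $$K(b_1,b_2;\phi)=\frac{1}{\left[(b_1-\cos\phi)^2+(b_2-\sin\phi)^2\right]^2}$$ and the data map $$\mathcal{A}(A,b_1,b_2)=\big(A\,K(b_1,b_2;\phi_1),\;A\,K(b_1,b_2;\phi_2),\;A\,K(b_1,b_2;\phi_3)\big).$$ Then the parameters $(A,b_1,b_2)$ (the area and center of the anomaly) are uniquely determined by the data $\mathcal{A}(A,b_1,b_2)$; that is, $\mathcal{A}$ is injective on $\{(A,b_1,b_2): A>0,\ b_1^2+b_2^2\le R\}$.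
   Context: Setting: a small (elliptical) conductivity anomaly of area $A$ centered at $(b_1,b_2)$ inside the unit disc, with small conductivity contrast against a constant background. Under linearization and to leading order in the anomaly size, the measurement (tangential derivative of the perturbation potential) produced by a boundary dipole placed at $(\cos\phi,\sin\phi)$ equals $A\,K(b_1,b_2;\phi)$, where $K(b_1,b_2;\phi)=|\nabla U_0(b_1,b_2)|^2$ with $U_0$ the dipole potential; measurements are taken at three angles $\phi_1,\phi_2,\phi_3$. *)

From Stdlib Require Import Reals.
Open Scope R_scope.

Definition K (b1 b2 phi : R) : R :=
  1 / ((b1 - cos phi) ^ 2 + (b2 - sin phi) ^ 2) ^ 2.

Definition data_map (phi1 phi2 phi3 : R) (A b1 b2 : R) : R * R * R :=
  (A * K b1 b2 phi1, A * K b1 b2 phi2, A * K b1 b2 phi3).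

Definition admissible (Rad A b1 b2 : R) : Prop :=
  0 < A /\ b1 ^ 2 + b2 ^ 2 <= Rad.

From Stdlib Require Import Reals ZArith Lra.
Open Scope R_scope.

(* Equal data at phi_i means A / d_i^2 = A' / d_i'^2, where d_i and d_i' are the
   squared distances from the centres b and b' to P_i = (cos phi_i, sin phi_i);
   hence d_i' = k d_i for all three i, with k = sqrt (A'/A).  For P on the unit
   circle, |b' - P|^2 - k |b - P|^2 is affine in P, and an affine function
   vanishing at three distinct points of the circle has zero linear part and
   zero constant: b' = k b and |b'|^2 + 1 = k (|b|^2 + 1).  Unless k = 1 this
   makes b and b' inverse points for the unit circle, impossible for two points
   of the open disc; so k = 1, b' = b and A' = A. *)

Definition sqdist (x y u v : R) : R := (x - u) ^ 2 + (y - v) ^ 2.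

Lemma sqdist_pos x y u v : (x, y) <> (u, v) -> 0 < sqdist x y u v.
Proof.
  unfold sqdist; intros Hneq.
  assert (Hge : 0 <= (x - u) ^ 2 + (y - v) ^ 2)
    by (pose proof (pow2_ge_0 (x - u)); pose proof (pow2_ge_0 (y - v)); lra).
  destruct (Rle_lt_or_eq_dec _ _ Hge) as [Hlt | Heq]; [exact Hlt |].
  assert (Hsq : (x - u)² + (y - v)² = 0) by (rewrite Heq; unfold Rsqr; ring).
  destruct (Rplus_sqr_eq_0 _ _ Hsq).
  exfalso; apply Hneq; f_equal; lra.
Qed.

Lemma inside_disc_sqdist_pos x y c s :
  x ^ 2 + y ^ 2 < 1 -> c ^ 2 + s ^ 2 = 1 -> 0 < sqdist x y c s.
Proof.
  intros Hin Hcs; apply sqdist_pos; intros Heq.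
  injection Heq as -> ->; lra.
Qed.

Lemma cos2_plus_sin2 x : cos x ^ 2 + sin x ^ 2 = 1.
Proof. rewrite <- (sin2_cos2 x); unfold Rsqr; ring. Qed.

Lemma cos_sin_eq_2PI_multiple p q :
  cos p = cos q -> sin p = sin q -> exists n : Z, p - q = 2 * IZR n * PI.
Proof.
  intros Hc Hs.
  assert (Hcos : cos (2 * ((p - q) / 2)) = 1).
  { replace (2 * ((p - q) / 2)) with (p - q) by field.
    rewrite cos_minus, Hc, Hs, <- (cos2_plus_sin2 q); ring. }
  rewrite cos_2a_sin in Hcos.
  assert (Hsin : sin ((p - q) / 2) = 0) by nra.
  destruct (sin_eq_0_0 _ Hsin) as [n Hn].
  exists n; lra.
Qed.

Lemma unit_circle_sqdist_pos p q :
  (forall n : Z, p - q <> 2 * IZR n * PI) ->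
  0 < sqdist (cos p) (sin p) (cos q) (sin q).
Proof.
  intros Hpq; apply sqdist_pos; intros Heq.
  injection Heq as Hc Hs.
  destruct (cos_sin_eq_2PI_multiple p q Hc Hs) as [n Hn].
  exact (Hpq n Hn).
Qed.

Lemma orthogonal_to_nonzero_parallel u1 u2 v1 v2 d1 d2 :
  0 < d1 ^ 2 + d2 ^ 2 -> u1 * d1 + u2 * d2 = 0 -> v1 * d1 + v2 * d2 = 0 ->
  u1 * v2 - u2 * v1 = 0.
Proof.
  intros Hd Hu Hv.
  assert (H1 : (u1 * v2 - u2 * v1) * d1 = v2 * (u1 * d1 + u2 * d2) - u2 * (v1 * d1 + v2 * d2)) by ring.
  assert (H2 : (u1 * v2 - u2 * v1) * d2 = u1 * (v1 * d1 + v2 * d2) - v1 * (u1 * d1 + u2 * d2)) by ring.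
  rewrite Hu, Hv in H1, H2.
  set (c := u1 * v2 - u2 * v1) in *.
  assert (Hc : c ^ 2 * (d1 ^ 2 + d2 ^ 2) = 0).
  { replace (c ^ 2 * (d1 ^ 2 + d2 ^ 2)) with ((c * d1) ^ 2 + (c * d2) ^ 2) by ring.
    rewrite H1, H2; ring. }
  destruct (Rmult_integral _ _ Hc); nra.
Qed.

Lemma orthogonal_parallel_zero w1 w2 d1 d2 :
  0 < d1 ^ 2 + d2 ^ 2 -> w1 * d1 + w2 * d2 = 0 -> w1 * d2 - w2 * d1 = 0 ->
  w1 = 0 /\ w2 = 0.
Proof.
  intros Hd Hdot Hcross.
  assert (Hlag : (w1 ^ 2 + w2 ^ 2) * (d1 ^ 2 + d2 ^ 2)
                 = (w1 * d1 + w2 * d2) ^ 2 + (w1 * d2 - w2 * d1) ^ 2) by ring.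
  rewrite Hdot, Hcross in Hlag.
  destruct (Rmult_integral (w1 ^ 2 + w2 ^ 2) (d1 ^ 2 + d2 ^ 2)) as [Hw | Hd0];
    [lra | split; nra | lra].
Qed.

Lemma secant_normal_parallel_midpoint a b e p1 q1 p2 q2 :
  p1 ^ 2 + q1 ^ 2 = 1 -> p2 ^ 2 + q2 ^ 2 = 1 -> 0 < sqdist p1 q1 p2 q2 ->
  a * p1 + b * q1 = e -> a * p2 + b * q2 = e ->
  a * (q1 + q2) - b * (p1 + p2) = 0.
Proof.
  unfold sqdist; intros Hp1 Hp2 Hd Hl1 Hl2.
  apply (orthogonal_to_nonzero_parallel _ _ _ _ (p1 - p2) (q1 - q2)); [exact Hd | lra |].
  replace ((p1 + p2) * (p1 - p2) + (q1 + q2) * (q1 - q2))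
    with ((p1 ^ 2 + q1 ^ 2) - (p2 ^ 2 + q2 ^ 2)) by ring.
  lra.
Qed.

Lemma sqdist_ratio_linear k x y x' y' c s : c ^ 2 + s ^ 2 = 1 ->
  sqdist x' y' c s = k * sqdist x y c s ->
  (x' - k * x) * c + (y' - k * y) * s
  = (x' ^ 2 + y' ^ 2 + 1 - k * (x ^ 2 + y ^ 2 + 1)) / 2.
Proof.
  unfold sqdist; intros Hcs Hratio.
  assert (Hk : k * (c ^ 2 + s ^ 2) = k) by (rewrite Hcs; ring).
  lra.
Qed.

Lemma disc_scaling_ratio_eq_1 k x y :
  0 < k -> x ^ 2 + y ^ 2 < 1 -> (k * x) ^ 2 + (k * y) ^ 2 < 1 ->
  (k * x) ^ 2 + (k * y) ^ 2 + 1 = k * (x ^ 2 + y ^ 2 + 1) -> k = 1.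
Proof.
  intros Hk Hin Hin' Hsum.
  assert (Hfac : (k - 1) * (k * (x ^ 2 + y ^ 2) - 1) = 0) by nra.
  destruct (Rmult_integral _ _ Hfac) as [H | Hinv]; [lra |].
  assert (Hk1 : k < 1) by nra.
  nra.
Qed.

Section ThreeCirclePoints.

Variables c1 s1 c2 s2 c3 s3 : R.
Hypotheses (Hc1 : c1 ^ 2 + s1 ^ 2 = 1) (Hc2 : c2 ^ 2 + s2 ^ 2 = 1)
  (Hc3 : c3 ^ 2 + s3 ^ 2 = 1).
Hypotheses (H12 : 0 < sqdist c1 s1 c2 s2) (H13 : 0 < sqdist c1 s1 c3 s3)
  (H23 : 0 < sqdist c2 s2 c3 s3).

Lemma line_through_three_circle_points_degenerate a b e :
  a * c1 + b * s1 = e -> a * c2 + b * s2 = e -> a * c3 + b * s3 = e ->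
  a = 0 /\ b = 0.
Proof.
  intros Hl1 Hl2 Hl3.
  pose proof (secant_normal_parallel_midpoint a b e _ _ _ _ Hc1 Hc2 H12 Hl1 Hl2).
  pose proof (secant_normal_parallel_midpoint a b e _ _ _ _ Hc1 Hc3 H13 Hl1 Hl3).
  apply (orthogonal_parallel_zero _ _ (c2 - c3) (s2 - s3)); [exact H23 | lra | lra].
Qed.

Lemma constant_sqdist_ratio_same_point k x y x' y' :
  0 < k -> x ^ 2 + y ^ 2 < 1 -> x' ^ 2 + y' ^ 2 < 1 ->
  sqdist x' y' c1 s1 = k * sqdist x y c1 s1 ->
  sqdist x' y' c2 s2 = k * sqdist x y c2 s2 ->
  sqdist x' y' c3 s3 = k * sqdist x y c3 s3 ->
  k = 1 /\ x' = x /\ y' = y.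
Proof.
  intros Hk Hin Hin' Hr1 Hr2 Hr3.
  apply sqdist_ratio_linear in Hr1, Hr2, Hr3; auto.
  destruct (line_through_three_circle_points_degenerate _ _ _ Hr1 Hr2 Hr3) as [Ha Hb].
  assert (Hx' : x' = k * x) by lra.
  assert (Hy' : y' = k * y) by lra.
  rewrite Ha, Hb, Hx', Hy' in Hr1; rewrite Hx', Hy' in Hin' |- *.
  assert (k = 1) as -> by (apply (disc_scaling_ratio_eq_1 k x y); lra).
  repeat split; ring.
Qed.

End ThreeCirclePoints.

Lemma inv_sq_eq_sqrt_ratio A A' d e : 0 < A -> 0 < A' -> 0 < d -> 0 < e ->
  A * (1 / d ^ 2) = A' * (1 / e ^ 2) -> e = sqrt (A' / A) * d.
Proof.
  intros HA HA' Hd He Heq.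
  assert (He2 : e ^ 2 = A' / A * d ^ 2).
  { apply (Rmult_eq_reg_l (A / d ^ 2)); [| apply Rgt_not_eq, Rdiv_lt_0_compat; nra].
    replace (A / d ^ 2 * e ^ 2) with (A * (1 / d ^ 2) * e ^ 2) by (field; lra).
    rewrite Heq; field; lra. }
  assert (Hq : 0 <= A' / A) by (apply Rlt_le, Rdiv_lt_0_compat; assumption).
  rewrite <- (sqrt_pow2 e), He2, sqrt_mult_alt, sqrt_pow2; lra.
Qed.

Theorem theorem1 (phi1 phi2 phi3 Rad : R)
  (h12 : forall n : Z, phi1 - phi2 <> 2 * IZR n * PI)
  (h13 : forall n : Z, phi1 - phi3 <> 2 * IZR n * PI)
  (h23 : forall n : Z, phi2 - phi3 <> 2 * IZR n * PI)
  (hR0 : 0 < Rad) (hR1 : Rad < 1) :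
  forall A b1 b2 A' b1' b2' : R,
    admissible Rad A b1 b2 ->
    admissible Rad A' b1' b2' ->
    data_map phi1 phi2 phi3 A b1 b2 = data_map phi1 phi2 phi3 A' b1' b2' ->
    A = A' /\ b1 = b1' /\ b2 = b2'.
Proof.
  intros A b1 b2 A' b1' b2' [hA hb] [hA' hb'] Hdata.
  injection Hdata as E1 E2 E3.
  assert (Hin : b1 ^ 2 + b2 ^ 2 < 1) by lra.
  assert (Hin' : b1' ^ 2 + b2' ^ 2 < 1) by lra.
  assert (Hk : 0 < sqrt (A' / A)) by (apply sqrt_lt_R0, Rdiv_lt_0_compat; assumption).
  assert (Hratio : forall phi, A * K b1 b2 phi = A' * K b1' b2' phi ->
    sqdist b1' b2' (cos phi) (sin phi) = sqrt (A' / A) * sqdist b1 b2 (cos phi) (sin phi)).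
  { intros phi Hphi.
    apply inv_sq_eq_sqrt_ratio; auto using inside_disc_sqdist_pos, cos2_plus_sin2. }
  destruct (constant_sqdist_ratio_same_point (cos phi1) (sin phi1) (cos phi2) (sin phi2)
              (cos phi3) (sin phi3) (cos2_plus_sin2 _) (cos2_plus_sin2 _) (cos2_plus_sin2 _)
              (unit_circle_sqdist_pos _ _ h12) (unit_circle_sqdist_pos _ _ h13)
              (unit_circle_sqdist_pos _ _ h23) _ _ _ _ _ Hk Hin Hin'
              (Hratio _ E1) (Hratio _ E2) (Hratio _ E3)) as [Hk1 [-> ->]].
  assert (Hq : A' / A = 1).
  { rewrite <- (pow2_sqrt (A' / A)), Hk1; [ring | apply Rlt_le, Rdiv_lt_0_compat; assumption]. }
  split; [| split; reflexivity].
  replace A' with (A' / A * A) by (field; lra).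
  rewrite Hq; ring.
Qed.
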